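(* Let $\mathscr X=[0,1]^2$ with the Euclidean norm $\|\cdot\|_2$. Let $\mathbf x_1=(1/2,1/2)$ and, for $n\ge1$, let $\mathbf x_{n+1}$ be any point of $\mathrm{Arg}\max_{\mathbf x\in\mathscr X}\min_{1\le i\le n}\|\mathbf x-\mathbf x_i\|_2$, with $\mathbf X_n=\{\mathbf x_1,\ldots,\mathbf x_n\}$. For $n\ge5$ let $m=m(n)=\lfloor\log_2(\sqrt{n/2-1/4}-1/2)\rfloor$, and set $\gamma_m=2^{-m}$, $n_m=(2^m+1)^2+4^m$, $k_m=(2^{m+1}+1)^2$. Then: - for $n=n_m$: $\mathsf{SR}(\mathbf X_n)=\gamma_m\sqrt2/4$, $\mathsf{CR}(\mathbf X_n)=\gamma_m/2$, $\mathsf{MR}(\mathbf X_n)=\sqrt2$; - for $n=n_m+1,\ldots,k_m-1$: $\mathsf{SR}(\mathbf X_n)=\gamma_m/4$, $\mathsf{CR}(\mathbf X_n)=\gamma_m/2$, $\mathsf{MR}(\mathbf X_n)=2$; - for $n=k_m$: $\mathsf{SR}(\mathbf X_n)=\gamma_m/4$, $\mathsf{CR}(\mathbf X_n)=\gamma_m\sqrt2/4$, $\mathsf{MR}(\mathbf X_n)=\sqrt2$; - for $n=k_m+1,\ldots,n_{m+1}-1$: $\mathsf{SR}(\mathbf X_n)=\gamma_m\sqrt2/8$, $\mathsf{CR}(\mathbf X_n)=\gamma_m\sqrt2/4$, $\mathsf{MR}(\mathbf X_n)=2$.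
   Context: Fill distance $\mathsf{CR}(\mathbf X_n)=\sup_{\mathbf x\in\mathscr X}\min_{i\le n}\|\mathbf x-\mathbf x_i\|_2$; separation radius $\mathsf{SR}(\mathbf X_n)=\tfrac12\min_{i\ne j\le n}\|\mathbf x_i-\mathbf x_j\|_2$; mesh-ratio $\mathsf{MR}(\mathbf X_n)=\mathsf{CR}(\mathbf X_n)/\mathsf{SR}(\mathbf X_n)$. The integer $m(n)$ is the unique integer with $n_m\le n<n_{m+1}$. *)

From Stdlib Require Import Reals.
From Coquelicot Require Import Coquelicot.
Open Scope R_scope.

Definition pt := (R * R)%type.

Definition dist2 (p q : pt) : R :=
  sqrt ((fst p - fst q) ^ 2 + (snd p - snd q) ^ 2).

Definition inSq (p : pt) : Prop :=
  0 <= fst p <= 1 /\ 0 <= snd p <= 1.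

(* A design is a sequence X : nat -> pt, 1-indexed (X 0 is unused).
   mind X n x = min_{1 <= i <= n} ||x - X i||_2   (for n >= 1). *)
Fixpoint mind (X : nat -> pt) (n : nat) (x : pt) : R :=
  match n with
  | O => 0
  | S k => match k with
           | O => dist2 x (X 1%nat)
           | S _ => Rmin (mind X k x) (dist2 x (X n))
           end
  end.

Fixpoint minpair (X : nat -> pt) (n : nat) : R :=
  match n with
  | O => 0
  | S k => match k with
           | O => 0
           | S O => dist2 (X 1%nat) (X 2%nat)
           | S _ => Rmin (minpair X k) (mind X k (X n))
           end
  end.

Definition SR (X : nat -> pt) (n : nat) : R := minpair X n / 2.

Definition CR (X : nat -> pt) (n : nat) : R :=
  real (Lub_Rbar (fun v => exists x, inSq x /\ v = mind X n x)).

Definition MR (X : nat -> pt) (n : nat) : R := CR X n / SR X n.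

Definition log2 (x : R) : R := ln x / ln 2.

Definition gamma_ (m : nat) : R := / 2 ^ m.
Definition n_ (m : nat) : nat := ((2 ^ m + 1) ^ 2 + 4 ^ m)%nat.
Definition k_ (m : nat) : nat := ((2 ^ (S m) + 1) ^ 2)%nat.

From Stdlib Require Import Reals Lra Lia Psatz List Classical.
From Coquelicot Require Import Coquelicot.
Open Scope R_scope.

(** The greedy design runs through the dyadic lattices: after [n_ m] points it is
    exactly the centred lattice of mesh [2^-m] (grid plus cell centres), after [k_ m]
    points exactly the square grid of mesh [2^-(m+1)].  Each stage passes from a
    lattice [C] to a finer lattice [U] at a constant fill distance [r], the covering
    radius of [C]: every point of the square farther than [r] from [C] is a node of [U],
    and distinct nodes of [U] are at least [r] apart.  Hence, while a node of [U] is
    missing, the farthest point lies at distance exactly [r] and is a new node of [U];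
    counting nodes ends the stage.  Both radii are read off these fill distances,
    since [SR(X_n)] is half the distance at which [x_n] was chosen. *)

Definition sqdist (p q : pt) : R := (fst p - fst q) ^ 2 + (snd p - snd q) ^ 2.

Lemma sqdist_ge0 p q : 0 <= sqdist p q.
Proof.
  unfold sqdist. pose proof (pow2_ge_0 (fst p - fst q)). pose proof (pow2_ge_0 (snd p - snd q)).
  lra.
Qed.

Lemma dist2_sym p q : dist2 p q = dist2 q p.
Proof. unfold dist2; f_equal; ring. Qed.

Lemma dist2_self p : dist2 p p = 0.
Proof. unfold dist2. replace (_ + _) with 0 by ring. apply sqrt_0. Qed.

Lemma dist2_le_iff r p q : 0 <= r -> dist2 p q <= r <-> sqdist p q <= r ^ 2.
Proof.
  intros Hr. change (dist2 p q) with (sqrt (sqdist p q)). split; intros H.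
  - rewrite <- (pow2_sqrt (sqdist p q)) by apply sqdist_ge0.
    apply pow_incr; split; [apply sqrt_pos | exact H].
  - rewrite <- (sqrt_pow2 r Hr). now apply sqrt_le_1_alt.
Qed.

Lemma dist2_ge_iff r p q : 0 <= r -> r <= dist2 p q <-> r ^ 2 <= sqdist p q.
Proof.
  intros Hr. change (dist2 p q) with (sqrt (sqdist p q)). split; intros H.
  - rewrite <- (pow2_sqrt (sqdist p q)) by apply sqdist_ge0.
    apply pow_incr; split; [exact Hr | exact H].
  - rewrite <- (sqrt_pow2 r Hr). now apply sqrt_le_1_alt.
Qed.

Lemma Rdiv_le_div_iff c a b : 0 < c -> a / c <= b / c <-> a <= b.
Proof.
  intros Hc. split; intros H.
  - apply Rmult_le_reg_r with (/ c); [now apply Rinv_0_lt_compat | exact H].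
  - apply Rmult_le_compat_r; [left; now apply Rinv_0_lt_compat | exact H].
Qed.

Lemma dist2_le_scaled_iff k s r p q : 0 < k -> 0 <= r -> sqdist p q = s / k ^ 2 ->
  dist2 p q <= r / k <-> s <= r ^ 2.
Proof.
  intros Hk Hr Hs. rewrite dist2_le_iff, Hs by (apply Rdiv_le_0_compat; lra).
  replace ((r / k) ^ 2) with (r ^ 2 / k ^ 2) by (field; lra).
  apply Rdiv_le_div_iff, pow_lt, Hk.
Qed.

Lemma dist2_ge_scaled_iff k s r p q : 0 < k -> 0 <= r -> sqdist p q = s / k ^ 2 ->
  r / k <= dist2 p q <-> r ^ 2 <= s.
Proof.
  intros Hk Hr Hs. rewrite dist2_ge_iff, Hs by (apply Rdiv_le_0_compat; lra).
  replace ((r / k) ^ 2) with (r ^ 2 / k ^ 2) by (field; lra).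
  apply Rdiv_le_div_iff, pow_lt, Hk.
Qed.

Fixpoint points (X : nat -> pt) (n : nat) : list pt :=
  match n with O => nil | S k => X (S k) :: points X k end.

Lemma points_length X n : length (points X n) = n.
Proof. induction n; simpl; auto. Qed.

Lemma mind_succ X n y : (1 <= n)%nat ->
  mind X (S n) y = Rmin (mind X n y) (dist2 y (X (S n))).
Proof. intros Hn. destruct n; [lia | reflexivity]. Qed.

Lemma mind_le_dist2 X n y q : (1 <= n)%nat -> In q (points X n) -> mind X n y <= dist2 y q.
Proof.
  induction n as [|n IH]; intros Hn Hq; [lia|].
  destruct (Nat.eq_dec n 0) as [->|Hn0].
  - destruct Hq as [<-|[]]. simpl; lra.
  - rewrite mind_succ by lia. destruct Hq as [<-|Hq].
    + apply Rmin_r.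
    + eapply Rle_trans; [apply Rmin_l | apply IH; [lia | exact Hq]].
Qed.

Lemma mind_ge X n y r : (1 <= n)%nat ->
  (forall q, In q (points X n) -> r <= dist2 y q) -> r <= mind X n y.
Proof.
  induction n as [|n IH]; intros Hn Hq; [lia|].
  destruct (Nat.eq_dec n 0) as [->|Hn0].
  - apply Hq. now left.
  - rewrite mind_succ by lia. apply Rmin_glb.
    + apply IH; [lia|]. intros q Hin. apply Hq. now right.
    + apply Hq. now left.
Qed.

Definition greedy (X : nat -> pt) : Prop := forall n : nat, (1 <= n)%nat ->
  inSq (X (S n)) /\ (forall y : pt, inSq y -> mind X n y <= mind X n (X (S n))).

Definition fill (X : nat -> pt) (n : nat) : R := mind X n (X (S n)).

Section Greedy.

Variable X : nat -> pt.
Hypothesis HX : greedy X.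

Lemma fill_succ_le n : (1 <= n)%nat -> fill X (S n) <= fill X n.
Proof.
  intros Hn. unfold fill. rewrite mind_succ by exact Hn.
  eapply Rle_trans; [apply Rmin_l|]. apply (HX n Hn), (HX (S n)). lia.
Qed.

Lemma minpair_fill n : (1 <= n)%nat -> minpair X (S n) = fill X n.
Proof.
  induction n as [|[|n] IH]; intros Hn; [lia | apply dist2_sym |].
  change (minpair X (S (S (S n)))) with
    (Rmin (minpair X (S (S n))) (fill X (S (S n)))).
  rewrite IH by lia. apply Rmin_right, fill_succ_le. lia.
Qed.

Lemma CR_fill n : (1 <= n)%nat -> CR X n = fill X n.
Proof.
  intros Hn. unfold CR.
  rewrite (is_lub_Rbar_unique _ (Finite (fill X n))); [reflexivity|]. split.
  - intros v [x [Hx ->]]. simpl. now apply (HX n Hn).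
  - intros b Hb. apply Hb. exists (X (S n)). split; [apply (HX n Hn) | reflexivity].
Qed.

Lemma radii_of_fill n s c : (2 <= n)%nat -> fill X (pred n) = s -> fill X n = c ->
  SR X n = s / 2 /\ CR X n = c /\ MR X n = c / (s / 2).
Proof.
  intros Hn Hs Hc. destruct n as [|n]; [lia|]. simpl in Hs.
  assert (HSR : SR X (S n) = s / 2) by (unfold SR; rewrite minpair_fill by lia; now rewrite Hs).
  assert (HCR : CR X (S n) = c) by (rewrite CR_fill by lia; exact Hc).
  unfold MR. now rewrite HSR, HCR.
Qed.

End Greedy.

(** * One stage of the greedy construction *)

Lemma exists_not_in {A : Type} (U L : list A) : NoDup U -> (length L < length U)%nat ->
  exists u, In u U /\ ~ In u L.
Proof.
  intros HU Hlen. apply NNPP. intros Hnone.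
  assert (Hincl : incl U L).
  { intros u Hu. apply NNPP. intros Hnu. apply Hnone. now exists u. }
  pose proof (NoDup_incl_length HU Hincl). lia.
Qed.

Definition design_between (X : nat -> pt) (n : nat) (C U : list pt) : Prop :=
  NoDup (points X n) /\ incl (points X n) U /\ incl C (points X n).

Definition enumerates (X : nat -> pt) (U : list pt) : Prop :=
  design_between X (length U) U U.

Section Phase.

Variables (X : nat -> pt) (C U : list pt) (r : R).
Hypotheses (HX : greedy X) (HU : NoDup U) (Hr : 0 < r)
  (HUsq : forall p, In p U -> inSq p)
  (Hsep : forall p q, In p U -> In q U -> p <> q -> r <= dist2 p q)
  (Hcover : forall y, inSq y -> exists q, In q C /\ dist2 y q <= r)
  (Hrigid : forall y, inSq y -> (forall q, In q C -> r <= dist2 y q) -> In y U).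

Lemma fill_phase_step n : (1 <= n)%nat -> (n < length U)%nat -> design_between X n C U ->
  fill X n = r /\ design_between X (S n) C U.
Proof.
  intros Hn Hlen [Hnd [HinU HC]].
  destruct (HX n Hn) as [Hsq Hmax].
  assert (Hge : r <= fill X n).
  { destruct (exists_not_in U (points X n) HU) as [u [Hu Hnu]]; [now rewrite points_length|].
    apply Rle_trans with (mind X n u); [|now apply Hmax, HUsq].
    apply mind_ge; [exact Hn|]. intros q Hq.
    apply Hsep; [exact Hu | now apply HinU | intros ->; contradiction]. }
  assert (Hle : fill X n <= r).
  { destruct (Hcover _ Hsq) as [q [Hq Hqr]].
    apply Rle_trans with (dist2 (X (S n)) q); [|exact Hqr].
    apply mind_le_dist2; [exact Hn | now apply HC]. }
  assert (Hfar : forall q, In q (points X n) -> r <= dist2 (X (S n)) q).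
  { intros q Hq. replace r with (fill X n) by lra. now apply mind_le_dist2. }
  assert (Hnew : ~ In (X (S n)) (points X n)).
  { intros Hin. specialize (Hfar _ Hin). rewrite dist2_self in Hfar. lra. }
  split; [lra|]. repeat split.
  - now constructor.
  - intros p [<-|Hp]; [|now apply HinU].
    apply Hrigid; [exact Hsq|]. intros q Hq. now apply Hfar, HC.
  - intros p Hp. right. now apply HC.
Qed.

Lemma fill_phase n0 : (1 <= n0)%nat -> (n0 <= length U)%nat -> design_between X n0 C U ->
  (forall n, (n0 <= n < length U)%nat -> fill X n = r) /\ enumerates X U.
Proof.
  intros Hn0 HnU Hstart.
  assert (Hrun : forall n, (n0 <= n <= length U)%nat ->
    design_between X n C U /\ forall k, (n0 <= k < n)%nat -> fill X k = r).
  { induction n as [|n IH]; intros Hn; [lia|].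
    destruct (Nat.eq_dec n0 (S n)) as [<-|Hne]; [split; [exact Hstart | lia]|].
    destruct IH as [Hn' Hfill]; [lia|].
    destruct (fill_phase_step n) as [Hr' Hnext]; [lia | lia | exact Hn'|].
    split; [exact Hnext|]. intros k Hk.
    destruct (Nat.eq_dec k n) as [->|]; [exact Hr' | apply Hfill; lia]. }
  destruct (Hrun (length U)) as [[Hnd [HinU _]] Hfill]; [lia|].
  split; [exact Hfill|]. repeat split; auto.
  apply NoDup_length_incl; auto. now rewrite points_length.
Qed.

End Phase.

(** * Square and centred lattices *)

Lemma NoDup_list_prod {A B : Type} (l : list A) (l' : list B) :
  NoDup l -> NoDup l' -> NoDup (list_prod l l').
Proof.
  induction l as [|a l IH]; intros Hl Hl'; simpl; [constructor|].
  inversion_clear Hl as [|? ? Ha Hl0]. apply NoDup_app; auto.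
  - apply NoDup_map_NoDup_ForallPairs; [|exact Hl']. intros x y _ _ E. now injection E.
  - intros p Hin Hin'. apply in_map_iff in Hin as [b [<- _]].
    apply in_prod_iff in Hin' as [Ha' _]. contradiction.
Qed.

Lemma INR_ge1_pos N : (1 <= N)%nat -> 0 < INR N.
Proof. intros HN. apply lt_0_INR. lia. Qed.

Definition lat (N : nat) (ij : nat * nat) : pt := (INR (fst ij) / INR N, INR (snd ij) / INR N).

Definition grid (N : nat) : list pt := map (lat N) (list_prod (seq 0 (S N)) (seq 0 (S N))).

Definition centres (K : nat) : list pt :=
  map (fun ij => lat (2 * K) (2 * fst ij + 1, 2 * snd ij + 1)%nat) (list_prod (seq 0 K) (seq 0 K)).

Definition centred (K : nat) : list pt := grid K ++ centres K.

Lemma grid_length N : length (grid N) = (S N * S N)%nat.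
Proof. unfold grid. now rewrite length_map, length_prod, length_seq. Qed.

Lemma centred_length K : length (centred K) = (S K * S K + K * K)%nat.
Proof.
  unfold centred, centres.
  now rewrite length_app, grid_length, length_map, length_prod, length_seq.
Qed.

Lemma in_grid N p :
  In p (grid N) <-> exists x y, (x <= N)%nat /\ (y <= N)%nat /\ p = lat N (x, y).
Proof.
  unfold grid. rewrite in_map_iff. split.
  - intros [[x y] [<- Hin]]. apply in_prod_iff in Hin as [Hx Hy]. apply in_seq in Hx, Hy.
    exists x, y. repeat split; lia.
  - intros [x [y [Hx [Hy ->]]]]. exists (x, y). split; [reflexivity|].
    apply in_prod_iff; split; apply in_seq; lia.
Qed.

Lemma in_centres K p : In p (centres K) <->
  exists x y, (x < K)%nat /\ (y < K)%nat /\ p = lat (2 * K) (2 * x + 1, 2 * y + 1)%nat.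
Proof.
  unfold centres. rewrite in_map_iff. split.
  - intros [[x y] [<- Hin]]. apply in_prod_iff in Hin as [Hx Hy]. apply in_seq in Hx, Hy.
    exists x, y. repeat split; lia.
  - intros [x [y [Hx [Hy ->]]]]. exists (x, y). split; [reflexivity|].
    apply in_prod_iff; split; apply in_seq; lia.
Qed.

Lemma lat_double K a : (1 <= K)%nat -> lat K a = lat (2 * K) (2 * fst a, 2 * snd a)%nat.
Proof.
  intros HK. pose proof (INR_ge1_pos K HK). destruct a as [x y]. unfold lat; cbn [fst snd].
  rewrite !mult_INR. change (INR 2) with 2. f_equal; field; lra.
Qed.

Lemma lat_inj N a b : (1 <= N)%nat -> lat N a = lat N b -> a = b.
Proof.
  intros HN E. pose proof (INR_ge1_pos N HN). destruct a as [x y], b as [x' y'].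
  unfold lat in E; simpl in E. injection E as Ex Ey.
  apply Rmult_eq_reg_r, INR_eq in Ex, Ey; try (apply Rinv_neq_0_compat; lra).
  now subst.
Qed.

Lemma grid_NoDup N : (1 <= N)%nat -> NoDup (grid N).
Proof.
  intros HN. apply NoDup_map_NoDup_ForallPairs.
  - intros a b _ _. now apply lat_inj.
  - apply NoDup_list_prod; apply seq_NoDup.
Qed.

Lemma centred_NoDup K : (1 <= K)%nat -> NoDup (centred K).
Proof.
  intros HK. apply NoDup_app; [now apply grid_NoDup | |].
  - apply NoDup_map_NoDup_ForallPairs; [|apply NoDup_list_prod; apply seq_NoDup].
    intros [x y] [x' y'] _ _ E. apply lat_inj in E; [|lia]. injection E as Ex Ey.
    f_equal; lia.
  - intros p Hg Hc. apply in_grid in Hg as [x [y [_ [_ ->]]]].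
    apply in_centres in Hc as [x' [y' [_ [_ E]]]].
    rewrite lat_double in E by exact HK. apply lat_inj in E; [|lia].
    injection E as Ex _. lia.
Qed.

Lemma grid_double_incl K : (1 <= K)%nat -> incl (centred K) (grid (2 * K)).
Proof.
  intros HK p Hp. apply in_grid. apply in_app_or in Hp as [Hp|Hp].
  - apply in_grid in Hp as [x [y [Hx [Hy ->]]]].
    exists (2 * x)%nat, (2 * y)%nat. rewrite lat_double by exact HK. repeat split; lia.
  - apply in_centres in Hp as [x [y [Hx [Hy ->]]]].
    exists (2 * x + 1)%nat, (2 * y + 1)%nat. repeat split; lia.
Qed.

Lemma grid_inSq N p : (1 <= N)%nat -> In p (grid N) -> inSq p.
Proof.
  intros HN Hp. apply in_grid in Hp as [x [y [Hx [Hy ->]]]]. pose proof (INR_ge1_pos N HN).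
  apply le_INR in Hx, Hy. pose proof (pos_INR x). pose proof (pos_INR y).
  assert (Hunit : forall t, 0 <= t <= INR N -> 0 <= t / INR N <= 1).
  { intros t Ht. split; [apply Rdiv_le_0_compat; lra|].
    replace 1 with (INR N / INR N) by (field; lra). apply Rdiv_le_div_iff; lra. }
  split; apply Hunit; cbn [fst snd]; lra.
Qed.

Lemma centred_inSq K p : (1 <= K)%nat -> In p (centred K) -> inSq p.
Proof. intros HK Hp. apply (grid_inSq (2 * K)); [lia | now apply grid_double_incl]. Qed.

Lemma sqdist_lat N a b : (1 <= N)%nat -> sqdist (lat N a) (lat N b) =
  ((INR (fst a) - INR (fst b)) ^ 2 + (INR (snd a) - INR (snd b)) ^ 2) / INR N ^ 2.
Proof. intros HN. pose proof (INR_ge1_pos N HN). unfold sqdist, lat; cbn [fst snd]. field. lra. Qed.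

Lemma nat_sq_diff_ge1 x y : x <> y -> 1 <= (INR x - INR y) ^ 2.
Proof.
  intros Hxy. apply Nat.lt_gt_cases in Hxy as [Hl|Hl]; apply le_INR in Hl; rewrite S_INR in Hl; nra.
Qed.

Lemma nat_pair_sq_diff_ge1 a b : a <> b ->
  1 <= (INR (fst a) - INR (fst b)) ^ 2 + (INR (snd a) - INR (snd b)) ^ 2.
Proof.
  destruct a as [x y], b as [x' y']; cbn [fst snd]; intros Hab.
  pose proof (pow2_ge_0 (INR x - INR x')). pose proof (pow2_ge_0 (INR y - INR y')).
  destruct (Nat.eq_dec x x') as [<-|Hx].
  - assert (Hy : y <> y') by congruence. apply nat_sq_diff_ge1 in Hy. lra.
  - apply nat_sq_diff_ge1 in Hx. lra.
Qed.

Lemma grid_sep N p q : (1 <= N)%nat -> In p (grid N) -> In q (grid N) -> p <> q ->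
  1 / INR N <= dist2 p q.
Proof.
  intros HN Hp Hq Hpq.
  apply in_grid in Hp as [x [y [_ [_ ->]]]]. apply in_grid in Hq as [x' [y' [_ [_ ->]]]].
  rewrite (dist2_ge_scaled_iff _ _ _ _ _ (INR_ge1_pos N HN) Rle_0_1 (sqdist_lat N _ _ HN)), pow1.
  apply nat_pair_sq_diff_ge1. congruence.
Qed.

(* On the grid of mesh [1/(2K)], the centred lattice consists of the nodes whose
   two indices have the same parity. *)
Lemma in_centred_parity K p : (1 <= K)%nat -> In p (centred K) ->
  exists x y e, (e <= 1)%nat /\ p = lat (2 * K) (2 * x + e, 2 * y + e)%nat.
Proof.
  intros HK Hp. apply in_app_or in Hp as [Hp|Hp].
  - apply in_grid in Hp as [x [y [_ [_ ->]]]]. exists x, y, 0%nat.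
    rewrite lat_double by exact HK. split; [lia | cbn [fst snd]; do 2 f_equal; lia].
  - apply in_centres in Hp as [x [y [_ [_ ->]]]]. now exists x, y, 1%nat.
Qed.

Lemma parity_pair_sq_diff_ge2 x y e x' y' e' : (e <= 1)%nat -> (e' <= 1)%nat ->
  (2 * x + e, 2 * y + e)%nat <> (2 * x' + e', 2 * y' + e')%nat ->
  2 <= (INR (2 * x + e) - INR (2 * x' + e')) ^ 2 + (INR (2 * y + e) - INR (2 * y' + e')) ^ 2.
Proof.
  intros He He' Hne. destruct (Nat.eq_dec e e') as [<-|Hee].
  - assert (Hxy : (x, y) <> (x', y')) by congruence.
    apply nat_pair_sq_diff_ge1 in Hxy. cbn [fst snd] in Hxy.
    rewrite !plus_INR, !mult_INR. change (INR 2) with 2. nra.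
  - assert (Hx : (2 * x + e <> 2 * x' + e')%nat) by lia.
    assert (Hy : (2 * y + e <> 2 * y' + e')%nat) by lia.
    apply nat_sq_diff_ge1 in Hx, Hy. lra.
Qed.

Lemma centred_sep K p q : (1 <= K)%nat -> In p (centred K) -> In q (centred K) -> p <> q ->
  sqrt 2 / 2 / INR K <= dist2 p q.
Proof.
  intros HK Hp Hq Hpq.
  apply in_centred_parity in Hp as [x [y [e [He ->]]]]; [|exact HK].
  apply in_centred_parity in Hq as [x' [y' [e' [He' ->]]]]; [|exact HK].
  replace (sqrt 2 / 2 / INR K) with (sqrt 2 / INR (2 * K))
    by (pose proof (INR_ge1_pos K HK); rewrite mult_INR; change (INR 2) with 2; field; lra).
  rewrite (dist2_ge_scaled_iff _ _ _ _ _ (INR_ge1_pos (2 * K) ltac:(lia)) (sqrt_pos 2)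
    (sqdist_lat (2 * K) _ _ ltac:(lia))), pow2_sqrt by lra.
  apply parity_pair_sq_diff_ge2; [exact He | exact He' | congruence].
Qed.

(** * Reduction to the unit cell *)

Definition cell_pt (K i j : nat) (u v : R) : pt :=
  ((INR i + u) / INR K, (INR j + v) / INR K).

Lemma unit_interval_index K t : (1 <= K)%nat -> 0 <= t <= INR K ->
  exists i, (i < K)%nat /\ INR i <= t <= INR i + 1.
Proof.
  induction K as [|K IH]; intros HK Ht; [lia|].
  destruct (Nat.eq_dec K 0) as [->|HK0].
  - exists 0%nat. simpl in *. split; [lia | lra].
  - rewrite S_INR in Ht. destruct (Rle_dec t (INR K)).
    + destruct IH as [i [Hi Hti]]; [lia | lra |]. exists i. split; [lia | exact Hti].
    + exists K. split; [lia | lra].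
Qed.

Lemma cell_decomp K y : (1 <= K)%nat -> inSq y -> exists i j a b,
  (i < K)%nat /\ (j < K)%nat /\ 0 <= a <= 1 /\ 0 <= b <= 1 /\ y = cell_pt K i j a b.
Proof.
  intros HK [Hy1 Hy2]. pose proof (INR_ge1_pos K HK).
  destruct (unit_interval_index K (fst y * INR K)) as [i [Hi Hti]]; [exact HK | nra |].
  destruct (unit_interval_index K (snd y * INR K)) as [j [Hj Htj]]; [exact HK | nra |].
  exists i, j, (fst y * INR K - INR i), (snd y * INR K - INR j).
  repeat split; try lra; try lia.
  destruct y as [y1 y2]. unfold cell_pt; cbn [fst snd]. f_equal; field; lra.
Qed.

Lemma sqdist_cell_pt K i j a b u v : (1 <= K)%nat ->
  sqdist (cell_pt K i j a b) (cell_pt K i j u v) = ((a - u) ^ 2 + (b - v) ^ 2) / INR K ^ 2.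
Proof.
  intros HK. pose proof (INR_ge1_pos K HK). unfold sqdist, cell_pt; cbn [fst snd].
  field. lra.
Qed.

Definition cells_in (K : nat) (O : R -> R -> Prop) (L : list pt) : Prop :=
  forall i j u v, (i < K)%nat -> (j < K)%nat -> O u v -> In (cell_pt K i j u v) L.

Lemma cover_of_cells K O L r : (1 <= K)%nat -> 0 <= r -> cells_in K O L ->
  (forall a b, 0 <= a <= 1 -> 0 <= b <= 1 ->
     exists u v, O u v /\ (a - u) ^ 2 + (b - v) ^ 2 <= r ^ 2) ->
  forall y, inSq y -> exists q, In q L /\ dist2 y q <= r / INR K.
Proof.
  intros HK Hr HL Hunit y Hy.
  destruct (cell_decomp K y HK Hy) as [i [j [a [b [Hi [Hj [Ha [Hb ->]]]]]]]].
  destruct (Hunit a b Ha Hb) as [u [v [Huv Hd]]].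
  exists (cell_pt K i j u v). split; [now apply HL|].
  now rewrite (dist2_le_scaled_iff _ _ _ _ _ (INR_ge1_pos K HK) Hr
    (sqdist_cell_pt K i j a b u v HK)).
Qed.

Lemma rigid_of_cells K O O' L L' r : (1 <= K)%nat -> 0 <= r ->
  cells_in K O L -> cells_in K O' L' ->
  (forall a b, 0 <= a <= 1 -> 0 <= b <= 1 ->
     (forall u v, O u v -> r ^ 2 <= (a - u) ^ 2 + (b - v) ^ 2) -> O' a b) ->
  forall y, inSq y -> (forall q, In q L -> r / INR K <= dist2 y q) -> In y L'.
Proof.
  intros HK Hr HL HL' Hunit y Hy Hfar.
  destruct (cell_decomp K y HK Hy) as [i [j [a [b [Hi [Hj [Ha [Hb ->]]]]]]]].
  apply HL'; [exact Hi | exact Hj |]. apply Hunit; [exact Ha | exact Hb |]. intros u v Huv.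
  rewrite <- (dist2_ge_scaled_iff _ _ _ _ _ (INR_ge1_pos K HK) Hr
    (sqdist_cell_pt K i j a b u v HK)).
  apply Hfar, HL; assumption.
Qed.

Definition corner (u v : R) : Prop := (u = 0 \/ u = 1) /\ (v = 0 \/ v = 1).

Definition centre (u v : R) : Prop := u = 1 / 2 /\ v = 1 / 2.

Definition half_node (u v : R) : Prop :=
  (u = 0 \/ u = 1 / 2 \/ u = 1) /\ (v = 0 \/ v = 1 / 2 \/ v = 1).

Lemma sqrt2_half_sq : (sqrt 2 / 2) ^ 2 = 1 / 2.
Proof.
  replace ((sqrt 2 / 2) ^ 2) with (sqrt 2 ^ 2 / 4) by field.
  rewrite pow2_sqrt; lra.
Qed.

Lemma unit_corner_cover a b : 0 <= a <= 1 -> 0 <= b <= 1 ->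
  exists u v, corner u v /\ (a - u) ^ 2 + (b - v) ^ 2 <= (sqrt 2 / 2) ^ 2.
Proof.
  rewrite sqrt2_half_sq. intros Ha Hb.
  destruct (Rle_dec a (1 / 2)); [exists 0 | exists 1];
  (destruct (Rle_dec b (1 / 2)); [exists 0 | exists 1]); split; solve [split; auto | nra].
Qed.

Lemma unit_corner_far a b : 0 <= a <= 1 -> 0 <= b <= 1 ->
  (forall u v, corner u v -> (sqrt 2 / 2) ^ 2 <= (a - u) ^ 2 + (b - v) ^ 2) -> centre a b.
Proof.
  rewrite sqrt2_half_sq. intros Ha Hb Hfar.
  pose proof (Hfar 0 0 ltac:(split; auto)). pose proof (Hfar 0 1 ltac:(split; auto)).
  pose proof (Hfar 1 0 ltac:(split; auto)). pose proof (Hfar 1 1 ltac:(split; auto)).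
  destruct (Rle_dec a (1 / 2)), (Rle_dec b (1 / 2)); split; nra.
Qed.

Lemma unit_centre_cover a b : 0 <= a <= 1 -> 0 <= b <= 1 ->
  exists u v, centre u v /\ (a - u) ^ 2 + (b - v) ^ 2 <= (sqrt 2 / 2) ^ 2.
Proof.
  rewrite sqrt2_half_sq. intros Ha Hb. exists (1 / 2), (1 / 2). split; [split; reflexivity | nra].
Qed.

Lemma unit_centre_far a b : 0 <= a <= 1 -> 0 <= b <= 1 ->
  (forall u v, centre u v -> (sqrt 2 / 2) ^ 2 <= (a - u) ^ 2 + (b - v) ^ 2) -> corner a b.
Proof.
  rewrite sqrt2_half_sq. intros Ha Hb Hfar.
  pose proof (Hfar (1 / 2) (1 / 2) ltac:(split; reflexivity)) as Hc.
  assert (Ea : a * (1 - a) = 0) by nra. assert (Eb : b * (1 - b) = 0) by nra.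
  apply Rmult_integral in Ea, Eb. split; lra.
Qed.

Lemma unit_centred_cover a b : 0 <= a <= 1 -> 0 <= b <= 1 ->
  exists u v, (corner u v \/ centre u v) /\ (a - u) ^ 2 + (b - v) ^ 2 <= (1 / 2) ^ 2.
Proof.
  intros Ha Hb. destruct (Rle_dec ((a - 1 / 2) ^ 2 + (b - 1 / 2) ^ 2) (1 / 4)).
  - exists (1 / 2), (1 / 2). split; [right; split; reflexivity | lra].
  - destruct (Rle_dec a (1 / 2)); [exists 0 | exists 1];
    (destruct (Rle_dec b (1 / 2)); [exists 0 | exists 1]); split; solve [left; split; auto | nra].
Qed.

Lemma half_node_coord t : 0 <= t <= 1 ->
  t * (1 - 2 * t) = 0 \/ (1 - t) * (2 * t - 1) = 0 -> t = 0 \/ t = 1 / 2 \/ t = 1.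
Proof. intros Ht [E|E]; apply Rmult_integral in E; lra. Qed.

Lemma unit_centred_far a b : 0 <= a <= 1 -> 0 <= b <= 1 ->
  (forall u v, corner u v \/ centre u v -> (1 / 2) ^ 2 <= (a - u) ^ 2 + (b - v) ^ 2) ->
  half_node a b.
Proof.
  intros Ha Hb Hfar.
  pose proof (Hfar 0 0 ltac:(left; split; auto)). pose proof (Hfar 0 1 ltac:(left; split; auto)).
  pose proof (Hfar 1 0 ltac:(left; split; auto)). pose proof (Hfar 1 1 ltac:(left; split; auto)).
  pose proof (Hfar (1 / 2) (1 / 2) ltac:(right; split; reflexivity)).
  split; apply half_node_coord; try assumption;
  destruct (Rle_dec a (1 / 2)), (Rle_dec b (1 / 2)); solve [left; nra | right; nra].
Qed.

Lemma cell_pt_lat K N c i j u v a b : (1 <= K)%nat -> 0 < c -> INR N = c * INR K ->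
  INR a = c * (INR i + u) -> INR b = c * (INR j + v) -> cell_pt K i j u v = lat N (a, b).
Proof.
  intros HK Hc HN Ha Hb. pose proof (INR_ge1_pos K HK).
  unfold cell_pt, lat; cbn [fst snd]. rewrite HN, Ha, Hb. f_equal; field; lra.
Qed.

Lemma corner_index i u : u = 0 \/ u = 1 -> exists a, (a <= S i)%nat /\ INR a = 1 * (INR i + u).
Proof.
  intros [->| ->]; [exists i | exists (S i)]; (split; [lia|]); rewrite ?S_INR; ring.
Qed.

Lemma half_node_index i u : u = 0 \/ u = 1 / 2 \/ u = 1 ->
  exists a, (a <= 2 * i + 2)%nat /\ INR a = 2 * (INR i + u).
Proof.
  intros [->|[->| ->]]; [exists (2 * i)%nat | exists (2 * i + 1)%nat | exists (2 * i + 2)%nat];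
  (split; [lia|]); rewrite ?plus_INR, mult_INR; change (INR 2) with 2; simpl (INR 1); field.
Qed.

Lemma cells_corner_grid K : (1 <= K)%nat -> cells_in K corner (grid K).
Proof.
  intros HK i j u v Hi Hj [Hu Hv].
  destruct (corner_index i u Hu) as [a [Ha Ea]], (corner_index j v Hv) as [b [Hb Eb]].
  rewrite (cell_pt_lat K K 1 i j u v a b HK Rlt_0_1 ltac:(ring) Ea Eb).
  apply in_grid. exists a, b. repeat split; lia.
Qed.

Lemma cells_centre_centres K : (1 <= K)%nat -> cells_in K centre (centres K).
Proof.
  intros HK i j u v Hi Hj [-> ->].
  assert (Hodd : forall x, INR (2 * x + 1) = 2 * (INR x + 1 / 2)).
  { intros x. rewrite plus_INR, mult_INR. change (INR 2) with 2. simpl (INR 1). field. }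
  rewrite (cell_pt_lat K (2 * K) 2 i j _ _ _ _ HK Rlt_0_2
    ltac:(rewrite mult_INR; reflexivity) (Hodd i) (Hodd j)).
  apply in_centres. now exists i, j.
Qed.

Lemma cells_centred K : (1 <= K)%nat ->
  cells_in K (fun u v => corner u v \/ centre u v) (centred K).
Proof.
  intros HK i j u v Hi Hj [Huv|Huv]; apply in_or_app;
  [left; now apply cells_corner_grid | right; now apply cells_centre_centres].
Qed.

Lemma cells_half_node_grid K : (1 <= K)%nat -> cells_in K half_node (grid (2 * K)).
Proof.
  intros HK i j u v Hi Hj [Hu Hv].
  destruct (half_node_index i u Hu) as [a [Ha Ea]], (half_node_index j v Hv) as [b [Hb Eb]].
  rewrite (cell_pt_lat K (2 * K) 2 i j u v a b HK Rlt_0_2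
    ltac:(rewrite mult_INR; reflexivity) Ea Eb).
  apply in_grid. exists a, b. repeat split; lia.
Qed.

(** * The dyadic levels *)

Lemma centres_one : centres 1 = (1 / 2, 1 / 2) :: nil.
Proof. unfold centres, lat. simpl. replace (1 + 1) with 2 by ring. reflexivity. Qed.

Lemma pow2_ge1 m : (1 <= 2 ^ m)%nat.
Proof. induction m; simpl; lia. Qed.

Lemma centred_level_length m : length (centred (2 ^ m)) = n_ m.
Proof.
  rewrite centred_length. unfold n_. replace 4%nat with (2 * 2)%nat by reflexivity.
  rewrite Nat.pow_mul_l, Nat.pow_2_r. lia.
Qed.

Lemma grid_level_length m : length (grid (2 * 2 ^ m)) = k_ m.
Proof. rewrite grid_length. unfold k_. simpl Nat.pow. lia. Qed.

Lemma level_bounds m : (5 <= n_ m)%nat /\ (n_ m < k_ m)%nat /\ (k_ m < n_ (S m))%nat.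
Proof.
  pose proof (pow2_ge1 m). unfold n_, k_. replace 4%nat with (2 * 2)%nat by reflexivity.
  rewrite !Nat.pow_mul_l. simpl Nat.pow. nia.
Qed.

Lemma two_div_sqrt2 : 2 / sqrt 2 = sqrt 2.
Proof.
  pose proof (sqrt_lt_R0 2 ltac:(lra)).
  rewrite <- (sqrt_sqrt 2) at 1 by lra. field. lra.
Qed.

Section Levels.

Variable X : nat -> pt.
Hypothesis HX : greedy X.

Lemma centring_phase N : (1 <= N)%nat -> enumerates X (grid N) ->
  (forall n, (length (grid N) <= n < length (centred N))%nat -> fill X n = sqrt 2 / 2 / INR N) /\
  enumerates X (centred N).
Proof.
  intros HN [Hnd [Hin Hall]]. pose proof (INR_ge1_pos N HN) as HNpos.
  assert (Hr : 0 <= sqrt 2 / 2) by (apply Rdiv_le_0_compat; [apply sqrt_pos | lra]).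
  apply (fill_phase X (grid N) (centred N)).
  - exact HX.
  - now apply centred_NoDup.
  - apply Rdiv_lt_0_compat; [|exact HNpos]. apply Rdiv_lt_0_compat; [apply sqrt_lt_R0 |]; lra.
  - intros p. now apply centred_inSq.
  - intros p q. now apply centred_sep.
  - apply (cover_of_cells N corner); [exact HN | exact Hr | now apply cells_corner_grid |].
    exact unit_corner_cover.
  - intros y Hy Hfar. apply in_or_app. right.
    apply (rigid_of_cells N corner centre (grid N) (centres N) (sqrt 2 / 2)); try assumption.
    + now apply cells_corner_grid.
    + now apply cells_centre_centres.
    + exact unit_corner_far.
  - rewrite grid_length. lia.
  - rewrite grid_length, centred_length. lia.
  - repeat split; [exact Hnd | | exact Hall]. intros p Hp. now apply in_or_app; left; apply Hin.
Qed.

Lemma refining_phase K : (1 <= K)%nat -> enumerates X (centred K) ->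
  (forall n, (length (centred K) <= n < length (grid (2 * K)))%nat -> fill X n = 1 / 2 / INR K) /\
  enumerates X (grid (2 * K)).
Proof.
  intros HK [Hnd [Hin Hall]]. pose proof (INR_ge1_pos K HK) as HKpos.
  assert (Hr : 0 <= 1 / 2) by lra.
  apply (fill_phase X (centred K) (grid (2 * K))).
  - exact HX.
  - apply grid_NoDup. lia.
  - apply Rdiv_lt_0_compat; lra.
  - intros p. apply grid_inSq. lia.
  - intros p q Hp Hq Hpq.
    replace (1 / 2 / INR K) with (1 / INR (2 * K))
      by (rewrite mult_INR; change (INR 2) with 2; field; lra).
    apply grid_sep; [lia | assumption..].
  - apply (cover_of_cells K (fun u v => corner u v \/ centre u v)); try assumption.
    + now apply cells_centred.
    + exact unit_centred_cover.
  - apply (rigid_of_cells K (fun u v => corner u v \/ centre u v) half_node); try assumption.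
    + now apply cells_centred.
    + now apply cells_half_node_grid.
    + exact unit_centred_far.
  - rewrite centred_length. lia.
  - rewrite centred_length, grid_length. nia.
  - repeat split; [exact Hnd | | exact Hall].
    intros p Hp. now apply grid_double_incl, Hin.
Qed.

Hypothesis Hfirst : X 1%nat = (1 / 2, 1 / 2).

Lemma first_phase :
  (forall n, (1 <= n < 5)%nat -> fill X n = sqrt 2 / 2 / INR 1) /\ enumerates X (centred 1).
Proof.
  assert (Hr : 0 <= sqrt 2 / 2) by (apply Rdiv_le_0_compat; [apply sqrt_pos | lra]).
  assert (Hcentre : In (X 1%nat) (centres 1)) by (rewrite centres_one, Hfirst; now left).
  apply (fill_phase X (centres 1) (centred 1)).
  - exact HX.
  - now apply centred_NoDup.
  - simpl INR. apply Rdiv_lt_0_compat; [apply Rdiv_lt_0_compat; [apply sqrt_lt_R0 |] |]; lra.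
  - intros p. now apply centred_inSq.
  - intros p q. now apply centred_sep.
  - apply (cover_of_cells 1 centre); [lia | exact Hr | now apply cells_centre_centres |].
    exact unit_centre_cover.
  - intros y Hy Hfar. apply in_or_app. left.
    apply (rigid_of_cells 1 centre corner (centres 1) (grid 1) (sqrt 2 / 2)); try assumption.
    + lia.
    + now apply cells_centre_centres.
    + now apply cells_corner_grid.
    + exact unit_centre_far.
  - lia.
  - rewrite centred_length. lia.
  - repeat split.
    + repeat constructor. intros [].
    + intros p [<-|[]]. apply in_or_app. now right.
    + intros p Hp. rewrite centres_one, <- Hfirst in Hp. exact Hp.
Qed.

Lemma enumerates_level m : enumerates X (centred (2 ^ m)).
Proof.
  induction m as [|m IH]; [exact (proj2 first_phase)|].
  pose proof (pow2_ge1 m) as HK.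
  apply (centring_phase (2 * 2 ^ m)); [lia|].
  apply refining_phase; assumption.
Qed.

Lemma fill_level m :
  (forall n, (n_ m <= n < k_ m)%nat -> fill X n = 1 / 2 / INR (2 ^ m)) /\
  (forall n, (k_ m <= n < n_ (S m))%nat -> fill X n = sqrt 2 / 2 / INR (2 * 2 ^ m)).
Proof.
  pose proof (pow2_ge1 m) as HK.
  destruct (refining_phase (2 ^ m) HK (enumerates_level m)) as [Hfine Hgrid].
  destruct (centring_phase (2 * 2 ^ m) ltac:(lia) Hgrid) as [Hcoarse _].
  rewrite centred_level_length, grid_level_length in Hfine.
  pose proof (centred_level_length (S m)) as Hnext.
  change (2 ^ S m)%nat with (2 * 2 ^ m)%nat in Hnext.
  rewrite grid_level_length, Hnext in Hcoarse.
  split; assumption.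
Qed.

Lemma fill_before_level m : fill X (pred (n_ m)) = sqrt 2 / 2 / INR (2 ^ m).
Proof.
  destruct m as [|m].
  - apply (proj1 first_phase). cbv. lia.
  - apply (proj2 (fill_level m)). pose proof (pow2_ge1 m).
    unfold n_, k_. replace 4%nat with (2 * 2)%nat by reflexivity. rewrite !Nat.pow_mul_l.
    simpl Nat.pow. nia.
Qed.

End Levels.

Theorem theorem3
  (X : nat -> pt)
  (H1 : X 1%nat = (1/2, 1/2))
  (Hgreedy : forall n : nat, (1 <= n)%nat ->
     inSq (X (S n)) /\
     (forall y : pt, inSq y -> mind X n y <= mind X n (X (S n))))
  (n m : nat)
  (Hn : (5 <= n)%nat)
  (Hm : INR m <= log2 (sqrt (INR n / 2 - 1 / 4) - 1 / 2) < INR m + 1) :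
  (n = n_ m ->
     SR X n = gamma_ m * sqrt 2 / 4 /\ CR X n = gamma_ m / 2 /\ MR X n = sqrt 2) /\
  ((n_ m < n < k_ m)%nat ->
     SR X n = gamma_ m / 4 /\ CR X n = gamma_ m / 2 /\ MR X n = 2) /\
  (n = k_ m ->
     SR X n = gamma_ m / 4 /\ CR X n = gamma_ m * sqrt 2 / 4 /\ MR X n = sqrt 2) /\
  ((k_ m < n < n_ (S m))%nat ->
     SR X n = gamma_ m * sqrt 2 / 8 /\ CR X n = gamma_ m * sqrt 2 / 4 /\ MR X n = 2).
Proof.
  destruct (fill_level X Hgreedy H1 m) as [Hfine Hcoarse].
  pose proof (fill_before_level X Hgreedy H1 m) as Hprev.
  pose proof (level_bounds m) as Hb.
  assert (Hk : INR (2 ^ m) = / gamma_ m)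
    by (unfold gamma_; rewrite Rinv_inv, pow_INR; reflexivity).
  assert (Hg : 0 < gamma_ m) by (apply Rinv_0_lt_compat, pow_lt; lra).
  pose proof (sqrt_lt_R0 2 ltac:(lra)) as Hs.
  rewrite mult_INR in Hcoarse. change (INR 2) with 2 in Hcoarse.
  rewrite Hk in Hfine, Hcoarse, Hprev.
  split; [|split; [|split]]; intros Hrange.
  - subst n.
    destruct (radii_of_fill X Hgreedy (n_ m) _ _ ltac:(lia) Hprev (Hfine (n_ m) ltac:(lia)))
      as [-> [-> ->]].
    split; [field; lra | split; [field; lra |]].
    transitivity (2 / sqrt 2); [field; lra | exact two_div_sqrt2].
  - destruct (radii_of_fill X Hgreedy n _ _ ltac:(lia)
      (Hfine (pred n) ltac:(lia)) (Hfine n ltac:(lia))) as [-> [-> ->]].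
    repeat split; field; lra.
  - subst n.
    destruct (radii_of_fill X Hgreedy (k_ m) _ _ ltac:(lia)
      (Hfine (pred (k_ m)) ltac:(lia)) (Hcoarse (k_ m) ltac:(lia))) as [-> [-> ->]].
    repeat split; field; lra.
  - destruct (radii_of_fill X Hgreedy n _ _ ltac:(lia)
      (Hcoarse (pred n) ltac:(lia)) (Hcoarse n ltac:(lia))) as [-> [-> ->]].
    repeat split; field; lra.
Qed.
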